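(* There is no semi-equivelar map of type $(3,6,4,6)$ (triangle, hexagon, quadrilateral, hexagon around each vertex, in this cyclic order) on the closed surface of Euler characteristic $-1$. *)

From HB Require Import structures.
From mathcomp Require Import all_boot all_order all_algebra.
Set Implicit Arguments. Unset Strict Implicit. Unset Printing Implicit Defensive.

Section Maps.
Variables (V F : finType) (cyc : F -> seq V).

Definition face_edge (f : F) (x y : V) : bool :=
  [&& x \in cyc f, x != y & (next (cyc f) x == y) || (next (cyc f) y == x)].

Definition adj (x y : V) : bool := [exists f, face_edge f x y].

Definition edges : {set {set V}} := [set [set p.1; p.2] | p in [set p : V * V | adj p.1 p.2]].

Definition euler_char : int := (#|V|%:Z - #|edges|%:Z + #|F|%:Z)%R.

Definition polyhedral_complex : Prop :=
  [/\ forall f, uniq (cyc f) /\ 3 <= size (cyc f),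
      forall x y, adj x y -> #|[set f | face_edge f x y]| = 2 &
      forall f g, f != g ->
        let S := [set x | (x \in cyc f) && (x \in cyc g)] in
        #|S| <= 1 \/
        exists x y, S = [set x; y] /\ face_edge f x y /\ face_edge g x y].

Definition map_connected : Prop := forall x y : V, connect adj x y.

(* Together with "each edge in exactly two faces" this makes the link of v a
   4-cycle, so the carrier is a closed surface. *)
Definition type_3646 : Prop :=
  forall v : V, exists f0 f1 f2 f3 : F,
    [/\ [set f | v \in cyc f] = [set f0; f1; f2; f3],
        #|[set f | v \in cyc f]| = 4,
        [/\ size (cyc f0) = 3, size (cyc f1) = 6,
            size (cyc f2) = 4 & size (cyc f3) = 6] &
        [/\ exists u, face_edge f0 v u && face_edge f1 v u,
            exists u, face_edge f1 v u && face_edge f2 v u,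
            exists u, face_edge f2 v u && face_edge f3 v u &
            exists u, face_edge f3 v u && face_edge f0 v u]].

Definition semi_equivelar_3646 : Prop :=
  [/\ polyhedral_complex, map_connected & type_3646].

End Maps.

From mathcomp Require Import all_boot all_order all_algebra zify.
Set Implicit Arguments. Unset Strict Implicit. Unset Printing Implicit Defensive.

(* Let n be the number of vertices and f_k the number of k-gonal faces.
   Every vertex lies on one triangle, one square and two hexagons, so double
   counting vertex-face incidences gives 3 f_3 = n, 4 f_4 = n, 6 f_6 = 2 n,
   and the sum of all face sizes is 4 n.  Since every edge lies on exactly two
   faces, that sum also counts the ordered adjacent pairs, i.e. twice the
   number of edges; hence E = 2 n and 12 chi = 12 (n - 2n + n/3 + n/4 + n/3)
   = - n.  So chi = -1 forces n = 12 and f_6 = 4.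
   On the other hand, the two hexagons at a vertex x are the two faces of the
   vertex star not adjacent to each other, and they cannot share an edge: an
   edge xy of the first hexagon also lies on the triangle or on the square at
   x, so it would lie on three faces.  As two faces meet in at most a vertex
   or an edge, the pair of hexagons at x determines x, whence
   n <= C(f_6, 2) = 6 < 12, a contradiction. *)

Lemma rot_to_head (T : eqType) (s : seq T) x : uniq s -> x \in s ->
  exists s', [/\ uniq (x :: s'), size (x :: s') = size s & next s =1 next (x :: s')].
Proof.
move=> Us /rot_to[i s' def_s]; exists s'; rewrite -def_s rot_uniq size_rot.
by split=> // y; rewrite next_rot.
Qed.

Lemma next_neq (T : eqType) (s : seq T) x : uniq s -> 2 <= size s -> x \in s ->
  next s x != x.
Proof.
move=> Us s_ge2 xs; have [s' [U Sz ->]] := rot_to_head Us xs.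
case: s' U Sz => [|a r] U Sz; first by rewrite -Sz in s_ge2.
by move: U => /=; rewrite eqxx inE negb_or eq_sym => /andP[/andP[]].
Qed.

Lemma next_next_neq (T : eqType) (s : seq T) x : uniq s -> 3 <= size s -> x \in s ->
  next s (next s x) != x.
Proof.
move=> Us s_ge3 xs; have [s' [U Sz E]] := rot_to_head Us xs; rewrite !E.
case: s' U Sz {E} => [|a [|b r]] U Sz; try by rewrite -Sz in s_ge3.
move: U => /=; rewrite eqxx !inE !negb_or => /and4P[/and3P[xa xb _] _ _ _].
by rewrite eq_sym in xa; rewrite (negbTE xa) eqxx eq_sym.
Qed.

(* A polygon with boundary cycle s has 2 |s| darts (ordered pairs of
   consecutive vertices): the forward and backward ones are disjoint
   because s has length at least 3. *)
Lemma card_cycle_darts (T : finType) (s : seq T) : uniq s -> 3 <= size s ->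
  #|[set p : T * T | [&& p.1 \in s, p.1 != p.2 &
      (next s p.1 == p.2) || (next s p.2 == p.1)]]| = 2 * size s.
Proof.
move=> Us s_ge3; have s_ge2 : 2 <= size s by apply: ltnW.
set fwd := [set (x, next s x) | x in s]; set bwd := [set (next s x, x) | x in s].
have -> : [set p : T * T | [&& p.1 \in s, p.1 != p.2 &
      (next s p.1 == p.2) || (next s p.2 == p.1)]] = fwd :|: bwd.
  apply/setP=> [[a b]]; rewrite !inE /=; apply/idP/idP.
    case/and3P=> [a_s ab /orP[] /eqP E].
      by apply/orP; left; apply/imsetP; exists a => //; rewrite E.
    apply/orP; right; apply/imsetP; exists b; last by rewrite E.
    by rewrite -mem_next E.
  case/orP=> /imsetP[x xs [-> ->]] /=.
    by rewrite xs eq_sym next_neq //= eqxx.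
  by rewrite mem_next xs next_neq //= eqxx orbT.
have disj : fwd :&: bwd = set0.
  apply/setP=> [[a b]]; rewrite !inE; apply/negP.
  move=> /andP[/imsetP[x xs [-> ->]] /imsetP[y ys [Ey Ex]]].
  by move: (next_next_neq Us s_ge3 ys); rewrite -Ey -Ex eqxx.
rewrite cardsU disj cards0 subn0 !card_imset; try by move=> x y [].
by rewrite (card_uniqP Us) addnn mul2n.
Qed.

Lemma card_set_sum (T : finType) (P : pred T) : #|[set x | P x]| = \sum_x (P x : nat).
Proof. by rewrite -sum1dep_card big_mkcond /=; apply: eq_bigr => x _; case: (P x). Qed.

Lemma double_count (I J : finType) (R : I -> J -> bool) :
  \sum_i #|[set j | R i j]| = \sum_j #|[set i | R i j]|.
Proof.
rewrite (eq_bigr (fun i => \sum_j (R i j : nat))); last by move=> i _; rewrite card_set_sum.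
by rewrite exchange_big /=; apply: eq_bigr => j _; rewrite card_set_sum.
Qed.

Lemma card_set3 (T : finType) (a b c : T) :
  #|[set a; b; c]| = (a \notin [set b; c]) + (b != c).+1.
Proof. by rewrite -setUA -cards2 cardsU1. Qed.

Section PolyhedralMaps.
Variables (V F : finType) (cyc : F -> seq V).

Definition faces_at (v : V) (k : nat) : {set F} :=
  [set f | (v \in cyc f) && (size (cyc f) == k)].
Definition faces_of_size (k : nat) : {set F} := [set f | size (cyc f) == k].

Definition darts : {set V * V} := [set p | adj cyc p.1 p.2].

Lemma face_edge_mem f x y : face_edge cyc f x y -> x \in cyc f.
Proof. by case/and3P. Qed.

Lemma face_edge_sym f x y : face_edge cyc f x y -> face_edge cyc f y x.
Proof.
case/and3P=> xs xy E; rewrite /face_edge eq_sym xy orbC E !andbT.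
by case/orP: E => /eqP E; [rewrite -E mem_next | rewrite -mem_next E].
Qed.

Lemma face_edge_next_prev f x y : uniq (cyc f) ->
  face_edge cyc f x y -> (y == next (cyc f) x) || (y == prev (cyc f) x).
Proof.
move=> U /and3P[_ _ /orP[] /eqP E]; first by rewrite E eqxx.
by rewrite -E prev_next // eqxx orbT.
Qed.

Lemma adj_sym x y : adj cyc x y -> adj cyc y x.
Proof. by case/existsP=> f E; apply/existsP; exists f; apply: face_edge_sym. Qed.

Lemma adj_neq x y : adj cyc x y -> x != y.
Proof. by case/existsP=> f /and3P[]. Qed.

Lemma card_darts_edges : #|darts| = 2 * #|edges cyc|.
Proof.
rewrite -sum1_card (partition_big_imset (fun p : V * V => [set p.1; p.2])) /=.
rewrite mulnC -sum_nat_const; apply: eq_bigr => e /imsetP[[a b]].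
rewrite inE /= => ab ->.
rewrite sum1dep_card (_ : [set _ | _] = [set (a, b); (b, a)]).
  by rewrite cards2 xpair_eqE negb_and (adj_neq ab).
apply/setP=> [[c d]]; rewrite !inE /= !xpair_eqE; apply/idP/idP.
  case/andP=> cd /eqP E; have c_neq_d := adj_neq cd.
  have : c \in [set a; b] by rewrite -E !inE eqxx.
  have : d \in [set a; b] by rewrite -E !inE eqxx orbT.
  rewrite !inE => /orP[]/eqP ? /orP[]/eqP ?; subst; rewrite ?eqxx ?orbT //= in c_neq_d *.
case/orP=> /andP[/eqP-> /eqP->]; rewrite ?ab ?eqxx //= adj_sym //=.
by apply/eqP/setP=> x; rewrite !inE orbC.
Qed.

Hypothesis cplx : polyhedral_complex cyc.

Lemma uniq_face f : uniq (cyc f).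
Proof. by case: cplx => /(_ f) []. Qed.

Lemma card_face_vertices f (b : bool) :
  #|[set v | (v \in cyc f) && b]| = b * size (cyc f).
Proof.
case: b; rewrite ?andbT ?andbF; last by rewrite card_set_sum big1 // => v; rewrite andbF.
by rewrite mul1n cardsE -(card_uniqP (uniq_face f)); apply: eq_card => v; exact: andbT.
Qed.

Lemma sum_faces_at k : \sum_v #|faces_at v k| = k * #|faces_of_size k|.
Proof.
rewrite (double_count (fun v f => (v \in cyc f) && (size (cyc f) == k))).
rewrite card_set_sum big_distrr; apply: eq_bigr => f _; rewrite card_face_vertices.
by case: eqP => [->|_] /=; rewrite ?muln0 ?muln1 ?mul0n ?mul1n.
Qed.

Lemma sum_vertex_degrees : \sum_v #|[set f | v \in cyc f]| = \sum_f size (cyc f).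
Proof.
rewrite (double_count (fun v f => v \in cyc f)); apply: eq_bigr => f _.
rewrite -[size _]mul1n -(card_face_vertices f true).
by apply: eq_card => v; rewrite !inE andbT.
Qed.

(* Since every edge lies on exactly two faces, the darts of all the faces
   count every dart of the map twice. *)
Lemma card_darts : #|darts| = \sum_f size (cyc f).
Proof.
have [face_ok two_faces _] := cplx.
have := double_count (fun (p : V * V) f => face_edge cyc f p.1 p.2).
rewrite (eq_bigr (fun p : V * V => 2 * adj cyc p.1 p.2)); last first.
  move=> p _; case A: (adj cyc p.1 p.2); first by rewrite two_faces.
  rewrite card_set_sum big1 // => f _; apply/eqP; rewrite eqb0; apply: contraFN A.
  by move=> fe; apply/existsP; exists f.
rewrite (eq_bigr (fun f => 2 * size (cyc f))); last first.
  by move=> f _; have [U S] := face_ok f; rewrite -card_cycle_darts.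
rewrite -!big_distrr /= -card_set_sum => /eqP; rewrite eqn_pmul2l // => /eqP.
by rewrite /darts => ->.
Qed.

Lemma edge_not_in_three_faces a b c x u : a != b -> a != c -> b != c ->
  face_edge cyc a x u -> face_edge cyc b x u -> face_edge cyc c x u -> False.
Proof.
have [_ two_faces _] := cplx; move=> ab ac bc fa fb fc.
have xu : adj cyc x u by apply/existsP; exists a.
have : [set a; b; c] \subset [set f | face_edge cyc f x u].
  by apply/subsetP=> f; rewrite !inE => /orP[/orP[]|] /eqP->.
move=> /subset_leq_card; rewrite two_faces // card_set3 !inE negb_or ab ac bc.
by [].
Qed.

Hypothesis type : type_3646 cyc.

Lemma vertex_star v : exists f0 f1 f2 f3,
    [/\ forall f, (v \in cyc f) = [|| f == f0, f == f1, f == f2 | f == f3],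
        [/\ size (cyc f0) = 3, size (cyc f1) = 6,
            size (cyc f2) = 4 & size (cyc f3) = 6],
        f1 != f3 &
        [/\ exists u, face_edge cyc f0 v u && face_edge cyc f1 v u,
            exists u, face_edge cyc f1 v u && face_edge cyc f2 v u,
            exists u, face_edge cyc f2 v u && face_edge cyc f3 v u &
            exists u, face_edge cyc f3 v u && face_edge cyc f0 v u]].
Proof.
have [f0 [f1 [f2 [f3 [E card4 S A]]]]] := type v; exists f0, f1, f2, f3; split=> //.
  by move=> f; move/setP: E => /(_ f); rewrite !inE => ->; rewrite !orbA.
apply/eqP=> f13; move: card4; rewrite E f13.
have -> : [set f0; f3; f2; f3] = [set f0; f3; f2].
  by apply/setP=> f; rewrite !inE; case: (f == f3); rewrite ?orbT ?orbF.
by rewrite card_set3; case: (_ \notin _); case: (_ != _).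
Qed.

Lemma card_faces_at v :
  [/\ #|faces_at v 3| = 1, #|faces_at v 4| = 1, #|faces_at v 6| = 2 &
      #|[set f | v \in cyc f]| = 4].
Proof.
have [f0 [f1 [f2 [f3 [M [s0 s1 s2 s3] f13 _]]]]] := vertex_star v.
have [_ [_ [_ [_ [_ -> _ _]]]]] := type v.
split=> //.
- rewrite (_ : faces_at v 3 = [set f0]) ?cards1 //; apply/setP=> f; rewrite !inE M.
  apply/idP/idP; last by move/eqP->; rewrite eqxx s0.
  by case/andP=> /or4P[]/eqP->; rewrite ?eqxx ?s1 ?s2 ?s3.
- rewrite (_ : faces_at v 4 = [set f2]) ?cards1 //; apply/setP=> f; rewrite !inE M.
  apply/idP/idP; last by move/eqP->; rewrite eqxx s2 !orbT.
  by case/andP=> /or4P[]/eqP->; rewrite ?eqxx ?s0 ?s1 ?s3.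
- rewrite (_ : faces_at v 6 = [set f1; f3]) ?cards2 ?f13 //; apply/setP=> f.
  rewrite !inE M; apply/idP/idP; last by case/orP=> /eqP->; rewrite eqxx ?s1 ?s3 ?orbT.
  by case/andP=> /or4P[]/eqP->; rewrite ?eqxx ?s0 ?s2 ?orbT.
Qed.

Lemma face_size f : [|| size (cyc f) == 3, size (cyc f) == 4 | size (cyc f) == 6].
Proof.
have [v vs] : exists v, v \in cyc f.
  have [face_ok _ _] := cplx; have [_ size_ge3] := face_ok f.
  by case: (cyc f) size_ge3 => [|v s] //= _; exists v; rewrite inE eqxx.
have [f0 [f1 [f2 [f3 [M [s0 s1 s2 s3] _ _]]]]] := vertex_star v.
by move: vs; rewrite M => /or4P[]/eqP->; rewrite ?s0 ?s1 ?s2 ?s3.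
Qed.

(* Two distinct hexagons never share an edge: at an endpoint x they would be
   the two hexagons of the star of x, and among the three edges of the first
   one shared with the triangle, the square and the second hexagon, two
   coincide (x has only two neighbours on a polygon), giving an edge on three
   faces. *)
Lemma hexagons_share_no_edge g g' x y : g != g' ->
  size (cyc g) = 6 -> size (cyc g') = 6 ->
  face_edge cyc g x y -> face_edge cyc g' x y -> False.
Proof.
move=> gg' sg sg' eg eg'.
have [f0 [f1 [f2 [f3 [M [s0 s1 s2 s3] f13 [[u1 /andP[a0 a1]] [u2 /andP[b1 b2]] _ _]]]]]] :=
  vertex_star x.
have f01 : f0 != f1 by apply/eqP=> e; move: s0; rewrite e s1.
have f02 : f0 != f2 by apply/eqP=> e; move: s0; rewrite e s2.
have f03 : f0 != f3 by apply/eqP=> e; move: s0; rewrite e s3.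
have f12 : f1 != f2 by apply/eqP=> e; move: s1; rewrite e s2.
have f23 : f2 != f3 by apply/eqP=> e; move: s2; rewrite e s3.
have hex h : size (cyc h) = 6 -> face_edge cyc h x y -> (h == f1) || (h == f3).
  move=> sh /face_edge_mem; rewrite M => /or4P[]/eqP e; rewrite e ?eqxx ?orbT //.
  - by move: sh; rewrite e s0.
  - by move: sh; rewrite e s2.
have [y1 y3] : face_edge cyc f1 x y /\ face_edge cyc f3 x y.
  by move: (hex _ sg eg) (hex _ sg' eg') => /orP[]/eqP eg1 /orP[]/eqP eg2;
    rewrite eg1 eg2 ?eqxx in gg' eg eg' *.
have U1 := uniq_face f1.
move: (face_edge_next_prev U1 a1) (face_edge_next_prev U1 b1) (face_edge_next_prev U1 y1).
move=> /orP[]/eqP E1 /orP[]/eqP E2 /orP[]/eqP E3; subst;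
  first [ exact: (edge_not_in_three_faces f01 f02 f12 a0 a1 b2)
        | exact: (edge_not_in_three_faces f01 f03 f13 a0 a1 y3)
        | exact: (edge_not_in_three_faces f12 f13 f23 b1 b2 y3) ].
Qed.

(* A vertex is determined by the pair of hexagons through it, since two
   distinct faces sharing two vertices would share an edge. *)
Lemma hexagon_pair_inj : injective (fun v => faces_at v 6).
Proof.
move=> v w E; apply/eqP; apply: contraT => vw.
have [f0 [f1 [f2 [f3 [M [_ s1 _ s3] f13 _]]]]] := vertex_star v.
have on_hex g : v \in cyc g -> size (cyc g) = 6 -> (v \in cyc g) && (w \in cyc g).
  move=> vg sg; have : g \in faces_at v 6 by rewrite inE vg sg eqxx.
  by rewrite /= E inE vg => /andP[-> _].
have v1 : v \in cyc f1 by rewrite M eqxx orbT.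
have v3 : v \in cyc f3 by rewrite M eqxx !orbT.
have [_ _ meet] := cplx; case: (meet _ _ f13) => /=.
  have : [set v; w] \subset [set x | (x \in cyc f1) && (x \in cyc f3)].
    apply/subsetP=> x; rewrite !inE => /orP[]/eqP->.
      by rewrite v1 v3.
    by have /andP[_ ->] := on_hex _ v1 s1; have /andP[_ ->] := on_hex _ v3 s3.
  by move/subset_leq_card; rewrite cards2 vw => /leq_trans H /H.
by move=> [x [y [_ [e1 e3]]]]; case: (hexagons_share_no_edge f13 s1 s3 e1 e3).
Qed.

Lemma card_faces_of_size k c : (forall v, #|faces_at v k| = c) ->
  k * #|faces_of_size k| = c * #|V|.
Proof.
move=> Hc; rewrite -sum_faces_at (eq_bigr (fun _ => c)) => [|v _]; last exact: Hc.
by rewrite sum_nat_const mulnC.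
Qed.

(* E = 2 n, since the face sizes sum to 4 n *)
Lemma card_edges_3646 : #|edges cyc| = 2 * #|V|.
Proof.
have sum_sizes : \sum_f size (cyc f) = 4 * #|V|.
  rewrite -sum_vertex_degrees (eq_bigr (fun _ => 4)) => [|v _]; last first.
    by have [_ _ _ ->] := card_faces_at v.
  by rewrite sum_nat_const mulnC.
by have := card_darts_edges; rewrite card_darts sum_sizes; lia.
Qed.

Lemma card_faces_3646 :
  #|F| = #|faces_of_size 3| + #|faces_of_size 4| + #|faces_of_size 6|.
Proof.
rewrite !card_set_sum -!big_split /= -sum1_card; apply: eq_bigr => f _.
by move: (face_size f) => /or3P[]/eqP->.
Qed.

Lemma hexagon_count : 6 * #|faces_of_size 6| = 2 * #|V|.
Proof. by apply: card_faces_of_size => v; have [] := card_faces_at v. Qed.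

Lemma euler_char_3646 : (12 * euler_char cyc = - #|V|%:Z)%R.
Proof.
have f3 : 3 * #|faces_of_size 3| = 1 * #|V|.
  by apply: card_faces_of_size => v; have [] := card_faces_at v.
have f4 : 4 * #|faces_of_size 4| = 1 * #|V|.
  by apply: card_faces_of_size => v; have [] := card_faces_at v.
have f6 : 6 * #|faces_of_size 6| = 2 * #|V| by apply: hexagon_count.
rewrite /euler_char card_edges_3646 card_faces_3646; lia.
Qed.

Lemma card_vertices_le_hexagon_pairs : #|V| <= 'C(#|faces_of_size 6|, 2).
Proof.
rewrite -cards_draws -cardsT -(card_imset _ hexagon_pair_inj).
apply: subset_leq_card; apply/subsetP=> A /imsetP[v _ ->]; rewrite inE.
have [_ _ -> _] := card_faces_at v; rewrite eqxx andbT.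
by apply/subsetP=> f; rewrite !inE => /andP[].
Qed.

End PolyhedralMaps.

Theorem lemma4p3 (V F : finType) (cyc : F -> seq V) :
  semi_equivelar_3646 cyc -> euler_char cyc <> (-1)%R.
Proof.
move=> [cplx _ type] chi_eq.
have n_eq12 : #|V| = 12 by have := euler_char_3646 cplx type; rewrite chi_eq; lia.
have hex_eq4 : #|faces_of_size cyc 6| = 4.
  by have := hexagon_count cplx type; lia.
have := card_vertices_le_hexagon_pairs cplx type.
by rewrite n_eq12 hex_eq4.
Qed.
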